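(* Let $\mathcal{Q}\subseteq 2^E$ ($E$ finite) be a simplicial complex (a nonempty family closed under taking subsets). If $\mathcal{Q}$ is weakly Rayleigh then $\mathcal{Q}$ is the set of independent sets of a matroid on $E$.
   Context: For $\omega:2^E\to[0,\infty)$ not identically zero, $Z(\omega;\mathbf{y})=\sum_S\omega(S)\prod_{e\in S}y_e$; with subscripts denoting partial derivatives, $Z$ is Rayleigh if $Z_eZ_f-Z_{ef}Z\ge0$ for all distinct $e,f$ and all positive $\mathbf{y}$. $\mathcal{Q}$ is weakly Rayleigh if some $\omega\ge0$ with $\{S:\omega(S)>0\}=\mathcal{Q}$ has $Z(\omega;\mathbf{y})$ Rayleigh. *)

From HB Require Import structures.
From mathcomp Require Import all_boot all_order all_algebra.
From mathcomp Require Import reals.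
From mathcomp Require Import mpoly.
Set Implicit Arguments. Unset Strict Implicit. Unset Printing Implicit Defensive.
Import Order.TTheory GRing.Theory Num.Theory.
Local Open Scope ring_scope.

(* The ground set E is modelled as 'I_n. Families of subsets of E are
   elements of {set {set 'I_n}}. *)

Definition simplicial_complex (n : nat) (Q : {set {set 'I_n}}) : Prop :=
  Q != set0 /\ (forall S T : {set 'I_n}, S \in Q -> T \subset S -> T \in Q).

Definition is_matroid_indep (n : nat) (Q : {set {set 'I_n}}) : Prop :=
  [/\ set0 \in Q,
      (forall S T : {set 'I_n}, S \in Q -> T \subset S -> T \in Q) &
      (forall I J : {set 'I_n}, I \in Q -> J \in Q -> #|I| < #|J| ->
         exists2 e, e \in J :\: I & e |: I \in Q)]%N.

Definition genpoly (R : realType) (n : nat) (omega : {set 'I_n} -> R)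
  : {mpoly R[n]} :=
  \sum_(S : {set 'I_n}) omega S *: \prod_(e in S) 'X_e.

Definition rayleigh (R : realType) (n : nat) (Z : {mpoly R[n]}) : Prop :=
  forall e f : 'I_n, e != f ->
  forall y : 'I_n -> R, (forall i, 0 < y i) ->
    0 <= (Z^`M(e)).@[y] * (Z^`M(f)).@[y] - ((Z^`M(e))^`M(f)).@[y] * Z.@[y].

Definition weakly_rayleigh (R : realType) (n : nat) (Q : {set {set 'I_n}})
  : Prop :=
  exists omega : {set 'I_n} -> R,
    [/\ (forall S, 0 <= omega S),
        (exists S, omega S != 0),
        (forall S, (0 < omega S) <-> (S \in Q)) &
        rayleigh (genpoly omega)].

(* If Q is not the complex of independent sets of a matroid, a violation of
   the augmentation axiom can be shrunk to an exchange failure: I in Q, a in I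
   and e <> f with I - a + e + f in Q but I + e, I + f not in Q.  Evaluate the
   generating polynomial Z at y = t on I and y = 1 elsewhere.  A set of Q
   containing e meets I in at most |I| - 1 further elements (else I + e would be
   in Q), so Z_e and Z_f are O(t^(|I|-1)), whereas Z_ef >= omega(I - a + e + f)
   t^(|I|-1) and Z >= omega(I) t^|I|.  Hence Z_e Z_f - Z_ef Z < 0 for t large. *)

From HB Require Import structures.
From mathcomp Require Import all_boot all_order all_algebra.
From mathcomp Require Import reals.
From mathcomp Require Import mpoly.
From mathcomp Require Import ring.
Set Implicit Arguments. Unset Strict Implicit. Unset Printing Implicit Defensive.
Import Order.TTheory GRing.Theory Num.Theory.
Local Open Scope ring_scope.

Section MultiaffineCalculus.
Variables (R : comNzRingType) (n : nat).
Implicit Types (X : {set 'I_n}) (P : pred {set 'I_n}) (c : {set 'I_n} -> R).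

Lemma mderivXU (i e : 'I_n) : ('X_i : {mpoly R[n]})^`M(e) = (i == e)%:R.
Proof.
rewrite mderivX mnm1E; case: eqP => [->|_]; last by rewrite scale0r.
by rewrite -{1}[U_(e)%MM]add0m addmK mpolyX0 scale1r.
Qed.

Lemma mderiv_prodX X e :
  (\prod_(i in X) 'X_i : {mpoly R[n]})^`M(e) =
  if e \in X then \prod_(i in X :\ e) 'X_i else 0.
Proof.
have prod_notin Y : e \notin Y -> (\prod_(i in Y) 'X_i : {mpoly R[n]})^`M(e) = 0.
  move=> eY; elim/big_rec: _ => [|i p iY Dp]; first by rewrite -mpolyC1 mderivC.
  by rewrite mderivM Dp mderivXU (negPf (memPn eY i iY)) mul0r mulr0 addr0.
case: ifPn => [eX|/prod_notin//].
by rewrite (big_setD1 e) //= mderivM mderivXU eqxx mul1r prod_notin ?setD11 ?mulr0 ?addr0.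
Qed.

Lemma meval_prodX X (y : 'I_n -> R) :
  (\prod_(i in X) 'X_i : {mpoly R[n]}).@[y] = \prod_(i in X) y i.
Proof.
rewrite (big_morph _ (mevalM y) (meval1 y)).
by apply: eq_bigr => i _; rewrite mevalXU.
Qed.

Lemma mderiv_sum_prodX P c (g : {set 'I_n} -> {set 'I_n}) e :
  (\sum_(S | P S) c S *: \prod_(i in g S) 'X_i : {mpoly R[n]})^`M(e) =
  \sum_(S | P S && (e \in g S)) c S *: \prod_(i in g S :\ e) 'X_i.
Proof.
rewrite raddf_sum big_mkcondr /=; apply: eq_bigr => S _.
by rewrite mderivZ mderiv_prodX; case: ifP; rewrite ?scaler0.
Qed.

Lemma meval_sum_prodX P c (g : {set 'I_n} -> {set 'I_n}) (y : 'I_n -> R) :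
  (\sum_(S | P S) c S *: \prod_(i in g S) 'X_i : {mpoly R[n]}).@[y] =
  \sum_(S | P S) c S * \prod_(i in g S) y i.
Proof.
by rewrite raddf_sum; apply: eq_bigr => S _; rewrite /= mevalZ meval_prodX.
Qed.

End MultiaffineCalculus.

Lemma rayleigh_genpolyE (R : realType) n (omega : {set 'I_n} -> R) e f y :
  ((genpoly omega)^`M(e)).@[y] * ((genpoly omega)^`M(f)).@[y]
    - ((genpoly omega)^`M(e)^`M(f)).@[y] * (genpoly omega).@[y] =
  (\sum_(S : {set 'I_n} | e \in S) omega S * \prod_(i in S :\ e) y i) *
  (\sum_(S : {set 'I_n} | f \in S) omega S * \prod_(i in S :\ f) y i) -
  (\sum_(S : {set 'I_n} | (e \in S) && (f \in S :\ e))
      omega S * \prod_(i in S :\ e :\ f) y i) *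
  (\sum_S omega S * \prod_(i in S) y i).
Proof.
rewrite /genpoly !(mderiv_sum_prodX _ _ id).
by rewrite (mderiv_sum_prodX _ _ (fun S => S :\ e)) !meval_sum_prodX.
Qed.

Lemma ler_sum_term (R : numDomainType) (I : finType) (P : pred I) (F : I -> R) j :
  (forall i, P i -> 0 <= F i) -> P j -> F j <= \sum_(i | P i) F i.
Proof.
move=> F_ge0 Pj; rewrite (bigD1 j) //= lerDl.
by apply: sumr_ge0 => i /andP[Pi _]; exact: F_ge0.
Qed.

Lemma mulrBmul_lt0 (R : realFieldType) (A B C D W p q u t : R) :
  0 <= A <= W * u -> 0 <= B <= W * u -> p * u <= C -> q * (u * t) <= D ->
  0 < p -> 0 < q -> 0 < u -> W ^+ 2 < p * q * t -> A * B - C * D < 0.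
Proof.
move=> /andP[A0 AW] /andP[B0 BW] pC qD p0 q0 u0 Wpq.
have t0 : 0 < t by rewrite -(pmulr_rgt0 _ (mulr_gt0 p0 q0)) (le_lt_trans (sqr_ge0 W)).
have qut0 : 0 <= q * (u * t) by rewrite !mulr_ge0 ?ltW.
rewrite subr_lt0 (le_lt_trans (ler_pM A0 B0 AW BW)) //.
apply: lt_le_trans (ler_pM _ qut0 pC qD); last by rewrite mulr_ge0 ?ltW.
have -> : p * u * (q * (u * t)) = (p * q * t) * u ^+ 2 by ring.
by rewrite -expr2 exprMn ltr_pM2r ?exprn_gt0.
Qed.

Definition exchange_failure n (Q : {set {set 'I_n}}) (I : {set 'I_n}) (a e f : 'I_n) :=
  [/\ I \in Q, a \in I, e != f, e |: (f |: (I :\ a)) \in Q &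
      (e |: I \notin Q) && (f |: I \notin Q)].

Definition boost_on (R : numDomainType) n (I : {set 'I_n}) (t : R) (i : 'I_n) : R :=
  if i \in I then t else 1.

Section ExchangeFailureNotRayleigh.
Variables (R : realType) (n : nat) (Q : {set {set 'I_n}}) (omega : {set 'I_n} -> R).
Hypotheses (omega_ge0 : forall S, 0 <= omega S)
           (omega_gt0 : forall S, 0 < omega S <-> S \in Q)
           (Q_hereditary : forall S T : {set 'I_n}, S \in Q -> T \subset S -> T \in Q).
Implicit Types (I S X : {set 'I_n}) (t : R).

Lemma omega_eq0 S : S \notin Q -> omega S = 0.
Proof.
move=> SQ; apply/eqP; rewrite eq_le omega_ge0 andbT leNgt.
by apply: contra SQ => /omega_gt0.
Qed.

Lemma prod_boost_on X I t : \prod_(i in X) boost_on I t i = t ^+ #|X :&: I|.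
Proof.
by rewrite -big_mkcondr -prodr_const; apply: eq_bigl => i; rewrite !inE.
Qed.

Lemma card_setD1I_lt S I x :
  S \in Q -> x \in S -> x |: I \notin Q -> (#|(S :\ x) :&: I| < #|I|)%N.
Proof.
move=> SQ xS; apply: contraR; rewrite -leqNgt => le_I.
have /eqP defI : (S :\ x) :&: I == I by rewrite eqEcard subsetIr.
apply: Q_hereditary SQ _; rewrite subUset sub1set xS -defI /=.
exact: subset_trans (subsetIl _ _) (subD1set _ _).
Qed.

Lemma partial_boost_le I x t : 1 <= t -> x |: I \notin Q ->
  \sum_(S : {set 'I_n} | x \in S) omega S * \prod_(i in S :\ x) boost_on I t i
    <= (\sum_S omega S) * t ^+ #|I|.-1.
Proof.
move=> t_ge1 xIQ; rewrite mulr_suml [X in _ <= X](bigID (fun S => x \in S)) /=.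
apply: ler_wpDr.
  by apply: sumr_ge0 => S _; rewrite mulr_ge0 // exprn_ge0 // (le_trans ler01).
apply: ler_sum => S xS.
have [SQ|/omega_eq0->] := boolP (S \in Q); last by rewrite !mul0r.
rewrite ler_wpM2l // prod_boost_on ler_weXn2l // -ltnS.
exact: leq_trans (card_setD1I_lt SQ xS xIQ) (leqSpred _).
Qed.

Lemma exchange_failure_not_rayleigh I a e f :
  exchange_failure Q I a e f -> ~ rayleigh (genpoly omega).
Proof.
case=> IQ aI nef TQ /andP[eIQ fIQ] ray.
set T := e |: (f |: (I :\ a)) in TQ.
have notin_I x : x |: I \notin Q -> x \notin I.
  by apply: contra => xI; rewrite (setUidPr _) // sub1set.
have [eI fI] := (notin_I e eIQ, notin_I f fIQ).
have [wT wI] : 0 < omega T /\ 0 < omega I by split; apply/omega_gt0.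
set W := \sum_S omega S.
pose t := W ^+ 2 / (omega T * omega I) + 1.
have t_ge1 : 1 <= t by rewrite lerDr divr_ge0 ?sqr_ge0 // mulr_ge0 ?ltW.
have t_gt0 : 0 < t by exact: lt_le_trans t_ge1.
have boost_gt0 i : 0 < boost_on I t i by rewrite /boost_on; case: ifP.
have term_ge0 (X S : {set 'I_n}) : 0 <= omega S * \prod_(i in X) boost_on I t i.
  by rewrite mulr_ge0 // prodr_ge0 // => i _; exact/ltW.
have partial_bounds x : x |: I \notin Q ->
    0 <= \sum_(S : {set 'I_n} | x \in S) omega S * \prod_(i in S :\ x) boost_on I t i
      <= W * t ^+ #|I|.-1.
  by move=> xIQ; rewrite sumr_ge0 ?partial_boost_le.
have := ray e f nef _ boost_gt0; rewrite rayleigh_genpolyE; apply/negP; rewrite -ltNge.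
apply: (mulrBmul_lt0 (W := W) (p := omega T) (q := omega I) (u := t ^+ #|I|.-1) (t := t));
  rewrite ?partial_bounds ?exprn_gt0 //.
- have TefE : T :\ e :\ f = I :\ a.
    by rewrite /T !setU1K // !inE ?(negPf eI) ?(negPf fI) ?andbF ?orbF.
  apply: (le_trans _ (ler_sum_term (j := T) _ _)) => //=; last first.
    by rewrite /T !(inE, eqxx, orTb, orbT, andTb, andbT) eq_sym.
  by rewrite TefE prod_boost_on (setIidPl (subD1set _ _)) (cardsD1 a I) aI.
- apply: (le_trans _ (ler_sum_term (j := I) _ _)) => //=.
  by rewrite prod_boost_on setIid -exprSr prednK // card_gt0; apply/set0Pn; exists a.
have c_gt0 : 0 < omega T * omega I by exact: mulr_gt0.
by rewrite /t mulrDr mulr1 [_ * (_ / _)]mulrC divfK ?gt_eqF // ltrDl.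
Qed.

End ExchangeFailureNotRayleigh.

Section ExchangeFailure.
Variables (n : nat) (Q : {set {set 'I_n}}).
Hypothesis Q_hereditary : forall S T : {set 'I_n}, S \in Q -> T \subset S -> T \in Q.
Implicit Types (I J : {set 'I_n}).

Definition augmentable I J := [exists x in J :\: I, x |: I \in Q].

Lemma exchange_failure_of_unaugmentable I J :
  I \in Q -> J \in Q -> (#|I| < #|J|)%N -> ~~ augmentable I J ->
  exists I0 a e f, exchange_failure Q I0 a e f.
Proof.
have [k] := ubnP #|I :\: J|; elim: k => // k IH in I J *.
move=> ltIJk IQ JQ ltIJ /exists_inPn notaug.
have [b bJI] : exists b, b \in J :\: I.
  apply/set0Pn; apply: contraTneq ltIJ => JI0.
  by rewrite -leqNgt subset_leq_card // -setD_eq0 JI0.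
have [a aIJ] : exists a, a \in I :\: J.
  apply/set0Pn; apply: contra (notaug b bJI); rewrite setD_eq0 => sIJ.
  apply: Q_hereditary JQ _; rewrite subUset sub1set sIJ andbT.
  by case/setDP: bJI.
have [aI aJ] := setDP aIJ.
have J_neq_a y : y \in J -> y != a by move=> yJ; apply: contraNneq aJ => <-.
have cardI : #|I| = #|I :\ a|.+1 by rewrite (cardsD1 a I) aI.
have ltIJa (X : {set 'I_n}) : X \subset (I :\: J) :\ a -> (#|X| < k)%N.
  move=> sX; rewrite ltnS in ltIJk; apply: leq_trans ltIJk.
  exact/proper_card/(sub_proper_trans sX)/properD1.
(* Either some b' in J \ I can replace a, which brings I closer to J, or
   removing a from I and any b from J gives a smaller violation. *)
have [/exists_inP[b' b'JI Ib'Q]|/exists_inPn noswap] :=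
  boolP [exists b in J :\: I, b |: (I :\ a) \in Q].
- have [b'J b'I] := setDP b'JI.
  have [/exists_inP[x xJI' xI'Q]|notaug'] := boolP (augmentable (b' |: (I :\ a)) J).
    case/setDP: xJI' => xJ; rewrite !inE negb_or => /andP[xb' xIa].
    have xI : x \notin I.
      by apply: contraNN xIa => ->; rewrite andbT J_neq_a.
    by exists I, a, x, b'; split; rewrite // !notaug // inE ?xI ?b'I.
  apply: (IH (b' |: (I :\ a)) J) => //.
    apply: ltIJa; apply/subsetP => y; rewrite !inE.
    by case/andP=> yJ /orP[/eqP yb'|/andP[-> ->]]; [rewrite yb' b'J in yJ | rewrite yJ].
  by rewrite cardsU1 !inE (negPf b'I) andbF add1n -cardI.
- have [bJ bI] := setDP bJI.
  apply: (IH (I :\ a) (J :\ b)).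
  + apply: ltIJa; apply/subsetP => x; rewrite !inE.
    case/and3P=> xJb -> xI; rewrite xI andbT /=; apply: contra xJb => ->.
    by rewrite andbT; apply: contraNneq bI => <-.
  + exact: Q_hereditary IQ (subD1set _ _).
  + exact: Q_hereditary JQ (subD1set _ _).
  + by move: ltIJ; rewrite cardI (cardsD1 b J) bJ.
  + apply/exists_inPn => x; rewrite !inE.
    case/and3P=> xIa _ xJ; apply: noswap; rewrite inE xJ andbT.
    by apply: contraNN xIa => ->; rewrite andbT J_neq_a.
Qed.

End ExchangeFailure.

Theorem corollary4p10 (R : realType) (n : nat) (Q : {set {set 'I_n}}) :
  simplicial_complex Q -> weakly_rayleigh R Q -> is_matroid_indep Q.
Proof.
move=> [Q_neq0 Q_hereditary] [omega [omega_ge0 _ omega_gt0 ray]].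
split=> // [|I J IQ JQ ltIJ].
  by case/set0Pn: Q_neq0 => S SQ; exact: Q_hereditary SQ (sub0set S).
have [/exists_inP[x xJI xIQ]|notaug] := boolP (augmentable Q I J).
  by exists x.
have [I0 [a [e [f failure]]]] :=
  exchange_failure_of_unaugmentable Q_hereditary IQ JQ ltIJ notaug.
by case: (exchange_failure_not_rayleigh omega_ge0 omega_gt0 Q_hereditary failure).
Qed.
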